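(* Let $\Gamma=\mathrm{Cay}(G,S)$ be a connected bipartite Cayley graph on $2n$ vertices with valency $k$, and let $H$ be the part of this bipartite graph containing the identity element (a normal subgroup of index $2$ in $G$). If $n$ is not divisible by $4$ and $0$ is not an eigenvalue of (the adjacency matrix of) $\Gamma$, then there is an involution $a\in G\setminus H$, so that $G=H\rtimes\langle a\rangle\cong H\rtimes\mathbb{Z}_2$.
   Context: For a finite group $G$ with identity $e$ and a subset $S\subseteq G\setminus\{e\}$ with $S=S^{-1}$, the Cayley graph $\mathrm{Cay}(G,S)$ has vertex set $G$, two vertices $a,b$ being adjacent iff $ab^{-1}\in S$. *)

From mathcomp Require Import all_boot all_order all_algebra all_fingroup all_solvable all_field.
Set Implicit Arguments. Unset Strict Implicit. Unset Printing Implicit Defensive.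
Import GRing.Theory Num.Theory.
Local Open Scope group_scope.

Definition cay_adj (gT : finGroupType) (S : {set gT}) : rel gT :=
  fun a b => a * b^-1 \in S.

Definition cay_connected (gT : finGroupType) (S : {set gT}) : Prop :=
  forall a b : gT, connect (cay_adj S) a b.

Definition cay_bipartition (gT : finGroupType) (S : {set gT}) (c : gT -> bool)
  : Prop := forall a b : gT, cay_adj S a b -> c a != c b.

Definition cay_part (gT : finGroupType) (c : gT -> bool) : {set gT} :=
  [set x | c x == c 1].

Definition cay_adjmx (gT : finGroupType) (S : {set gT}) : 'M[algC]_#|gT| :=
  \matrix_(i, j) ((cay_adj S (enum_val i) (enum_val j))%:R)%R.

From mathcomp Require Import all_boot all_order all_algebra all_fingroup all_solvable all_field.
From mathcomp Require Import zify.
Set Implicit Arguments. Unset Strict Implicit. Unset Printing Implicit Defensive.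
Local Open Scope group_scope.

(* Proposition 3.5.  Let Cay(G,S) be connected and bipartite, with |G| = 2n,
   4 not dividing n, and 0 not an eigenvalue; let H be the part containing 1.
   Connectedness makes the bipartition a homomorphism chi : G -> Z/2 with
   kernel H, and S lies outside H.  Pick t in S; its order o is even.
   - If o/2 is odd, a = t^(o/2) is an involution outside H and G = H >< <[a]>.
   - Otherwise 4 | o, and since o | 2n with 4 not dividing n, o = 4q with q
     odd and |H|/2 = n/2 odd.  Then g = t^q lies outside H and has order 4.
     Let delta : H -> Z/2 be the sign of the right regular action of H on
     itself; it is conjugation invariant, and delta(g^2) = 1 because g^2 is
     an involution acting without fixed points on the |H| points.  Hence
     delta extends to a character psi : G -> {1, -1, i, -i} with psi = +-i
     off H, so psi(s^-1) = -psi(s) on S, and the character sum over S, which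
     is the eigenvalue of the eigenvector psi, is 0: a contradiction. *)

Section InvolutionParity.
Variable T : finType.

Definition moved (s : {perm T}) : {set T} := [set x | s x != x].

Lemma moved0 (s : {perm T}) : moved s = set0 -> s = 1.
Proof.
move=> s0; apply/permP => x; rewrite perm1.
by have := in_set0 x; rewrite -s0 inE => /negbFE/eqP.
Qed.

Lemma involution_split (s : {perm T}) x :
  involutive s -> s x != x ->
  let s' := tperm x (s x) * s in
  involutive s' /\ moved s' = moved s :\ x :\ s x.
Proof.
move=> sK sx_x s'.
have s'E z : s' z = if z == x then x else if z == s x then s x else s z.
  rewrite permM; case: tpermP => [->|->|/eqP/negbTE-> /eqP/negbTE->//].
  - by rewrite eqxx sK.
  - by rewrite (negbTE sx_x) eqxx.
split.
- move=> z; rewrite !s'E; case: (eqVneq z x) => [->|z_x]; first by rewrite eqxx.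
  case: (eqVneq z (s x)) => [->|z_sx]; first by rewrite eqxx; case: eqP.
  rewrite (inj_eq (can_inj sK)) (negbTE z_x) -{1}(sK x) (inj_eq (can_inj sK)).
  by rewrite (negbTE z_sx).
- apply/setP => z; rewrite !inE s'E.
  case: (eqVneq z x) => [->|]; first by rewrite eqxx andbF.
  by case: (eqVneq z (s x)) => [->|]; rewrite ?eqxx.
Qed.

(* The parity of an involution is the parity of its number of 2-cycles. *)
Lemma odd_perm_involution (s : {perm T}) :
  involutive s -> odd_perm s = odd (#|moved s|./2).
Proof.
have [m] := ubnP #|moved s|; elim: m s => // m IHm s /ltnSE le_s_m sK.
case: (set_0Vmem (moved s)) => [s0|[x]].
  by rewrite s0 cards0 (moved0 s0) odd_perm1.
rewrite /moved inE => sx_x; have [s'K moved_s'] := involution_split sK sx_x.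
have sx_moved : s x \in moved s :\ x by rewrite /moved !inE sK sx_x eq_sym sx_x.
have card_s : #|moved s| = (#|moved (tperm x (s x) * s)|).+2.
  rewrite moved_s' (cardsD1 x) (cardsD1 (s x) (moved s :\ x)) sx_moved.
  by rewrite /moved !inE sx_x.
have -> : odd_perm s = odd_perm (tperm x (s x) * (tperm x (s x) * s)).
  by rewrite mulgA tperm2 mul1g.
rewrite odd_mul_tperm eq_sym sx_x card_s IHm // -ltnS -card_s; exact: leqW.
Qed.

End InvolutionParity.

(* A homomorphism chi from G to Z/2 (written additively in bool), with
   kernel K = [set x | ~~ chi x]. *)
Section Index2Kernel.
Variables (gT : finGroupType) (chi : gT -> bool).
Hypothesis chiM : forall x y, chi (x * y) = chi x (+) chi y.

Lemma chi1 : chi 1 = false.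
Proof. by have := chiM 1 1; rewrite mulg1 addbb. Qed.

Lemma chiV x : chi x^-1 = chi x.
Proof. by have := chiM x x^-1; rewrite mulgV chi1; case: (chi x); case: (chi _). Qed.

Lemma chiJ x y : chi (x ^ y) = chi x.
Proof. by rewrite conjgE !chiM chiV; case: (chi x); case: (chi y). Qed.

Lemma chiX x m : chi (x ^+ m) = odd m && chi x.
Proof.
elim: m => [|m IHm]; first by rewrite expg0 chi1.
by rewrite expgS chiM IHm /=; case: (chi x); case: (odd m).
Qed.

(* Both cosets of the kernel have the same size, so it contains half of G. *)
Lemma card_kernel t : chi t -> #|[set w | ~~ chi w]|.*2 = #|gT|.
Proof.
move=> chit; set K := [set w | ~~ chi w].
have coset : ~: K = [set t * w | w in K].
  apply/setP => x; rewrite !inE negbK; apply/idP/imsetP.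
  - by move=> chix; exists (t^-1 * x); rewrite ?mulKVg // inE chiM chiV chit chix.
  - by case=> w; rewrite inE => chiw ->; rewrite chiM chit (negbTE chiw).
by rewrite -(cardsC K) coset card_imset ?addnn //; exact: mulgI.
Qed.

Lemma kernel_group_set : group_set [set w | ~~ chi w].
Proof.
apply/group_setP; split; first by rewrite inE chi1.
by move=> x y; rewrite !inE chiM => /negbTE-> /negbTE->.
Qed.

Lemma kernel_sdprod a :
  chi a -> a ^+ 2 = 1 -> [set w | ~~ chi w] ><| <[a]> = [set: gT].
Proof.
move=> chia a2; pose K := Group kernel_group_set.
have ti : K :&: <[a]> = 1.
  apply/eqP; rewrite eqEsubset sub1G andbT; apply/subsetP => x /setIP[].
  rewrite inE => chix /cycleP[i def_x]; move: chix; rewrite def_x chiX chia andbT.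
  move=> even_i; rewrite -(odd_double_half i) (negbTE even_i) add0n -mul2n.
  by rewrite expgM a2 expg1n inE.
have nKa : <[a]> \subset 'N(K).
  rewrite cycle_subG; apply/normP/setP => x.
  by rewrite mem_conjg !inE chiJ.
rewrite (sdprodE nKa ti); apply/eqP; rewrite eqEsubset subsetT /=.
apply/subsetP => x _; case chix: (chi x).
- rewrite -(mulgKV a x); apply: mem_mulg; last exact: cycle_id.
  by rewrite inE chiM chiV chix chia.
- by rewrite -[x]mulg1; apply: mem_mulg; rewrite ?inE ?chix // group1.
Qed.

(* Right multiplication by h on K, extended by the identity outside K
   (and the identity altogether when h is not in K). *)
Definition kshift (h w : gT) := if chi w || chi h then w else w * h.

Lemma kshift_inj h : injective (kshift h).
Proof.
move=> w1 w2; rewrite /kshift; case chih: (chi h); rewrite ?orbT ?orbF //.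
case chiw1: (chi w1); case chiw2: (chi w2) => // e.
- by move: chiw1; rewrite e chiM chiw2 chih.
- by move: chiw2; rewrite -e chiM chiw1 chih.
- exact: mulIg e.
Qed.

Definition kperm h : {perm gT} := perm (@kshift_inj h).

(* ksign h is the sign of the permutation "right multiplication by h" of K;
   it is a homomorphism K -> Z/2 invariant under conjugation by G. *)
Definition ksign h := odd_perm (kperm h).

Lemma kpermE h w : kperm h w = kshift h w.
Proof. by rewrite permE. Qed.

Lemma ksignM h1 h2 :
  ~~ chi h1 -> ~~ chi h2 -> ksign (h1 * h2) = ksign h1 (+) ksign h2.
Proof.
move=> /negbTE chih1 /negbTE chih2; rewrite /ksign -odd_permM; congr odd_perm.
apply/permP => w; rewrite permM !kpermE /kshift chiM chih1 chih2 /= !orbF.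
by case chiw: (chi w); rewrite ?chiw // chiM chiw chih1 mulgA.
Qed.

Lemma ksignJ h y : ~~ chi h -> ksign (h ^ y) = ksign h.
Proof.
move=> /negbTE chih; pose q : {perm gT} := perm (@conjg_inj _ y).
have kpermJ : kperm (h ^ y) = kperm h ^ q.
  apply/permP => w; have [v ->] : exists v, w = q v.
    by exists (w ^ y^-1); rewrite permE conjgKV.
  rewrite permJ !kpermE !permE /kshift chiJ chih !orbF chiJ.
  by case: (chi _) => //; rewrite conjMg.
by rewrite /ksign kpermJ odd_permJ.
Qed.

(* For an involution z of K, right multiplication by z is a fixed-point-free
   involution of K, so it has sign (-1)^(|K|/2). *)
Lemma ksign_involution z : ~~ chi z -> z * z = 1 -> z != 1 ->
  ksign z = odd (#|[set w | ~~ chi w]|./2).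
Proof.
move=> /negbTE chiz zz z1; rewrite /ksign odd_perm_involution.
  suff -> : moved (kperm z) = [set w | ~~ chi w] by [].
  apply/setP => w; rewrite !inE kpermE /kshift chiz orbF.
  case: (chi w); first by rewrite eqxx.
  by rewrite -{2}[w]mulg1 (inj_eq (mulgI w)).
move=> w; rewrite !kpermE /kshift chiz !orbF.
by case chiw: (chi w); rewrite ?chiw // chiM chiw chiz -mulgA zz mulg1.
Qed.
End Index2Kernel.

(* Given a conjugation-invariant homomorphism
   delta : K -> Z/2 and g outside K with delta (g * g) = true, the map
   h * g^e |-> (-1)^(delta h) * 'i^e is multiplicative on G. *)
Section FourthRootCharacter.
Import GRing.Theory Num.Theory.
Local Open Scope ring_scope.
Variables (gT : finGroupType) (chi delta : gT -> bool) (g : gT).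
Hypothesis chiM : forall x y, chi (x * y)%g = chi x (+) chi y.
Hypothesis deltaM : forall x y, ~~ chi x -> ~~ chi y ->
  delta (x * y)%g = delta x (+) delta y.
Hypothesis deltaJ : forall x y, ~~ chi x -> delta (x ^ y)%g = delta x.
Hypothesis chig : chi g.
Hypothesis deltag2 : delta (g * g)%g.

(* With x = (x * g^-1) * g for x outside K. *)
Definition mu4 (x : gT) : algC :=
  if chi x then 'i * (-1) ^+ delta (x * g^-1)%g else (-1) ^+ delta x.

Lemma mu4M x y : mu4 (x * y)%g = mu4 x * mu4 y.
Proof.
have shift z : chi (z * g^-1)%g = ~~ chi z.
  by rewrite chiM (chiV chiM) chig addbT.
rewrite /mu4 chiM; case chix: (chi x); case chiy: (chi y) => /=.
- have kx : ~~ chi (x * g^-1)%g by rewrite shift chix.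
  have kyJ : ~~ chi ((y * g^-1) ^ g^-1)%g by rewrite (chiJ chiM) shift chiy.
  have kxy : ~~ chi ((x * g^-1) * (y * g^-1) ^ g^-1)%g.
    by rewrite chiM (negbTE kx) (negbTE kyJ).
  have kg2 : ~~ chi (g * g)%g by rewrite chiM addbb.
  have -> : (x * y = (x * g^-1) * (y * g^-1) ^ g^-1 * (g * g))%g.
    by rewrite conjgE invgK !mulgA !mulgKV.
  rewrite (deltaM kxy kg2) (deltaM kx kyJ) deltaJ ?shift ?chiy // deltag2.
  by rewrite !signr_addb mulrACA -expr2 sqrCi expr1 mulrN1 mulN1r.
- have -> : (x * y * g^-1 = (x * g^-1) * y ^ g^-1)%g.
    by rewrite conjgE invgK !mulgA mulgKV.
  rewrite deltaM ?(chiJ chiM) ?shift ?chix ?chiy // deltaJ ?chiy //.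
  by rewrite signr_addb mulrA.
- have -> : (x * y * g^-1 = x * (y * g^-1))%g by rewrite mulgA.
  by rewrite deltaM ?shift ?chix ?chiy // signr_addb mulrCA.
- by rewrite deltaM ?chix ?chiy // signr_addb.
Qed.

Lemma mu4_1 : mu4 1 = 1.
Proof.
have k1 : ~~ chi 1 by rewrite (chi1 chiM).
have delta1 : delta 1 = false by have := deltaM k1 k1; rewrite mulg1 addbb.
by rewrite /mu4 (chi1 chiM) delta1.
Qed.

(* Outside K the character takes the values +-'i, so it is odd under
   inversion there. *)
Lemma mu4V x : chi x -> mu4 x^-1 = - mu4 x.
Proof.
move=> chix; have sqr : mu4 x ^+ 2 = -1.
  by rewrite /mu4 chix exprMn sqrCi sqrr_sign mulr1.
rewrite -[RHS]mulr1 -mu4_1 -(mulgV x) mu4M mulrA mulNr -expr2 sqr.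
by rewrite opprK mul1r.
Qed.

End FourthRootCharacter.

Section CayleyGraph.
Import GRing.Theory Num.Theory.
Variables (gT : finGroupType) (S : {set gT}).

Lemma cay_generator : (1 < #|gT|)%N -> cay_connected S -> exists t, t \in S.
Proof.
move=> /card_gt1P[a [b [_ _ ab]]] conn.
have [x x_neq1] : exists x : gT, x != 1.
  by case: (eqVneq a 1) => [a1|]; [exists b; rewrite -a1 eq_sym | exists a].
have /connectP[[|y p] /= path_p last_p] := conn x 1.
  by rewrite last_p eqxx in x_neq1.
by exists (x * y^-1); case/andP: path_p.
Qed.

(* Every character psi of G (a multiplicative map to algC) gives the
   eigenvector (psi x)_x of the adjacency matrix of Cay(G,S), with
   eigenvalue the character sum over S. *)
Lemma cay_character_eigenvalue (psi : gT -> algC) :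
  (forall x y, psi (x * y) = (psi x * psi y)%R) -> psi 1 != 0%R ->
  eigenvalue (cay_adjmx S) (\sum_(s in S) psi s)%R.
Proof.
move=> psiM psi1; apply/eigenvalueP; exists (\row_i psi (enum_val i))%R.
  apply/rowP => j; rewrite !mxE; under eq_bigr => i _ do rewrite !mxE.
  rewrite -(big_enum_val (fun x => psi x * (cay_adj S x (enum_val j))%:R)%R).
  move: (enum_val j) => b.
  rewrite (eq_bigr (fun x => if x * b^-1 \in S then psi x else 0%R)); last first.
    by move=> x _; rewrite /cay_adj; case: (_ \in S); rewrite ?mulr1 ?mulr0.
  rewrite -big_mkcond /=.
  rewrite (reindex (fun s => s * b)) /=; last first.
    by exists (fun x => x * b^-1) => x _; rewrite ?mulgK ?mulgKV.
  rewrite (eq_bigl (mem S)) => [|x]; last by rewrite /cay_adj mulgK.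
  by rewrite mulr_suml; apply: eq_bigr => s _; rewrite psiM.
apply/negP => /eqP /rowP /(_ (enum_rank 1)); rewrite !mxE enum_rankK.
by apply/eqP.
Qed.

Lemma sum_odd_symmetric (R : numDomainType) (f : gT -> R) :
  (forall s, s \in S -> s^-1 \in S) ->
  (forall s, s \in S -> f s^-1 = (- f s)%R) ->
  (\sum_(s in S) f s = 0)%R.
Proof.
move=> SV fV; have sumN : (\sum_(s in S) f s = - \sum_(s in S) f s)%R.
  rewrite {1}(reindex_inj invg_inj) /= -sumrN; apply: eq_big => [x|x xS].
    by apply/idP/idP => /SV; rewrite ?invgK.
  by rewrite fV // -[x]invgK SV.
have : ((\sum_(s in S) f s) *+ 2 == 0)%R by rewrite mulr2n {2}sumN subrr.
by rewrite mulrn_eq0 => /eqP.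
Qed.

(* Indeed ksign(g^2) = 1, so the sign character of K extends
   to a character psi of G of order 4, which is odd on S. *)
Lemma cay_order4_eigenvalue0 (chi : gT -> bool) (g : gT) :
  (forall x y, chi (x * y) = chi x (+) chi y) ->
  (forall s, s \in S -> s^-1 \in S) -> (forall s, s \in S -> chi s) ->
  chi g -> g * g != 1 -> (g * g) * (g * g) = 1 ->
  odd #|[set w | ~~ chi w]|./2 ->
  eigenvalue (cay_adjmx S) 0%R.
Proof.
move=> chiM SV chiS chig z1 zz oddK.
have kz : ~~ chi (g * g) by rewrite chiM addbb.
have ksign_z : ksign chiM (g * g) by rewrite ksign_involution.
pose psi := mu4 chi (ksign chiM) g.
have psiM := mu4M chiM (ksignM chiM) (ksignJ chiM) chig ksign_z.
have psiV s : s \in S -> psi s^-1 = (- psi s)%R.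
  by move=> /chiS; apply: (mu4V chiM (ksignM chiM) (ksignJ chiM) chig ksign_z).
rewrite -(sum_odd_symmetric SV psiV); apply: cay_character_eigenvalue => //.
by rewrite /psi (mu4_1 g chiM (ksignM chiM)) oner_neq0.
Qed.

End CayleyGraph.

Lemma order_mod4 o n :
  (o %| 2 * n)%N -> ~~ (4 %| n)%N -> ~~ odd o -> ~~ odd o./2 ->
  [/\ o = (4 * (o %/ 4))%N, odd (o %/ 4) & odd n./2].
Proof.
move=> /dvdnP[r def_n] n4 /negbTE o_even /negbTE h_even.
have o4 : o = (4 * (o %/ 4))%N.
  by move: (odd_double_half o) (odd_double_half o./2); rewrite o_even h_even; lia.
move: def_n; rewrite o4; set q := o %/ 4 => def_n.
have -> : n./2 = (r * q)%N by lia.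
have odd_rq : odd (r * q)%N.
  apply: contraNT n4 => rq_even; move: (odd_double_half (r * q)%N).
  by rewrite (negbTE rq_even); lia.
have [_ odd_q] : odd r /\ odd q by apply/andP; rewrite -oddM.
by rewrite mulKn.
Qed.

Section BipartiteCayleyGraph.
Variables (gT : finGroupType) (S : {set gT}) (c : gT -> bool).

Definition cay_side x := c x != c 1.

Hypothesis bip : cay_bipartition S c.

Lemma cay_sideS s w : s \in S -> cay_side (s * w) = ~~ cay_side w.
Proof.
move=> sS; have := @bip (s * w) w; rewrite /cay_adj mulgK sS => /(_ isT).
by rewrite /cay_side; case: (c (s * w)); case: (c w); case: (c 1).
Qed.

Lemma cay_sideS1 s : s \in S -> cay_side s.
Proof. by move=> sS; rewrite -[s]mulg1 cay_sideS // /cay_side eqxx. Qed.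

(* In a connected bipartite Cayley graph the bipartition is a homomorphism
   G -> Z/2: every x is a product of generators, each switching sides. *)
Lemma cay_sideM :
  cay_connected S -> forall x y, cay_side (x * y) = cay_side x (+) cay_side y.
Proof.
move=> conn x; have /connectP[p] := conn x 1.
elim: p x => [|x1 p IHp] x /= => [_ <- y|/andP[x_x1 p_path] last_p y].
  by rewrite mul1g /cay_side eqxx.
have sS : x * x1^-1 \in S by [].
rewrite -[x](mulgKV x1) -mulgA !(cay_sideS _ sS) (IHp x1 p_path last_p).
by case: (cay_side x1); case: (cay_side y).
Qed.

Lemma cay_part_sdprod a : cay_connected S -> cay_side a -> a ^+ 2 = 1 ->
  [/\ a \notin cay_part c, a != 1, a ^+ 2 = 1 & cay_part c ><| <[a]> = [set: gT]].
Proof.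
move=> conn side_a a2; have sideM := cay_sideM conn.
have -> : cay_part c = [set w | ~~ cay_side w].
  by apply/setP => w; rewrite !inE negbK.
split=> //; first by rewrite inE side_a.
- by apply: contraTneq side_a => ->; rewrite (chi1 sideM).
- exact: kernel_sdprod.
Qed.

End BipartiteCayleyGraph.

Unset Implicit Arguments.

Theorem proposition3p5 (gT : finGroupType) (S : {set gT}) (n k : nat)
    (c : gT -> bool) :
  1 \notin S ->
  (forall x, x \in S -> x^-1 \in S) ->
  #|gT| = (2 * n)%N ->
  #|S| = k ->
  cay_connected S ->
  cay_bipartition S c ->
  ~~ (4 %| n)%N ->
  ~~ eigenvalue (cay_adjmx S) 0%R ->
  exists a : gT,
    [/\ a \notin cay_part c, a != 1, a ^+ 2 = 1
      & cay_part c ><| <[a]> = [set: gT]].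
Proof.
move=> _ SV cardG _ conn bip n4 no_eig0.
have sideM := cay_sideM bip conn; have sideS := cay_sideS1 bip.
have [t tS] : exists t, t \in S.
  apply: cay_generator conn; have : (0 < #|gT|)%N by apply/card_gt0P; exists 1.
  by rewrite cardG; lia.
have ot : t ^+ #[t] = 1 := expg_order t.
have o_even : ~~ odd #[t].
  by have := chiX sideM t #[t]; rewrite ot (chi1 sideM) sideS // andbT => <-.
have o_dvd : (#[t] %| 2 * n)%N by rewrite -cardG -cardsT order_dvdG ?inE.
have [half_odd | half_even] := boolP (odd #[t]./2).
  exists (t ^+ #[t]./2); apply: (cay_part_sdprod bip conn).
    by rewrite (chiX sideM) half_odd sideS.
  by rewrite -expgM muln2 halfK (negbTE o_even) subn0.
have [o4 odd_q odd_n2] := order_mod4 o_dvd n4 o_even half_even.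
set q := (#[t] %/ 4)%N in o4 odd_q; exfalso; move/negP: no_eig0; apply.
apply: (cay_order4_eigenvalue0 (g := t ^+ q) sideM SV sideS).
- by rewrite (chiX sideM) odd_q sideS.
- have q_pos : (0 < q)%N by rewrite lt0n; apply: contraTneq odd_q => ->.
  by rewrite -expgD -order_dvdn o4; apply/negP => /dvdn_leq; lia.
- by rewrite -!expgD !addnn -!mul2n mulnA -o4 ot.
- suff -> : #|[set w | ~~ cay_side c w]| = n by [].
  by apply: double_inj; rewrite (card_kernel sideM (sideS t tS)) cardG mul2n.
Qed.
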